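(* Let $n>1$, $a\in\mathcal{T}_n$, and consider the semigroup $(\mathcal{T}_n,*_a)$. Let $x\in\mathcal{T}_n$. If $\operatorname{rank}(a)>1$, $\operatorname{rank}(x)\le\operatorname{rank}(a)$, and every block $B$ of $\rho_x$ satisfies $B\cap\operatorname{ran}(a)\ne\varnothing$, then $$L_x=\{y\in\mathcal{T}_n : \operatorname{ran}(y)=\operatorname{ran}(x) \text{ and } B\cap\operatorname{ran}(a)\neq\varnothing \text{ for every block } B \text{ of } \rho_y\}.$$ Otherwise $L_x=\{x\}$. In particular, if $\operatorname{rank}(a)=1$ then all $\mathcal{L}$-classes of $(\mathcal{T}_n,*_a)$ consist of one element.
   Context: $\mathcal{T}_n$ is the set of all maps $N\to N$, $N=\{1,\dots,n\}$. Maps are composed from left to right: $(xy)(i)=y(x(i))$. For fixed $a\in\mathcal{T}_n$, $x*_a y:=xay$; $(\mathcal{T}_n,*_a)$ is a semigroup. $\operatorname{ran}(x)$ is the image of $x$, $\operatorname{rank}(x)=|\operatorname{ran}(x)|$, and $\rho_x$ is the partition of $N$ into the nonempty fibres of $x$ ($i,j$ in the same block iff $x(i)=x(j)$). Green's relations in a semigroup $S$: with $S^1$ the semigroup $S$ with an identity adjoined, $x\mathcal{L}y$ iff $S^1x=S^1y$, $x\mathcal{R}y$ iff $xS^1=yS^1$, $\mathcal{H}=\mathcal{L}\cap\mathcal{R}$, $\mathcal{D}=\mathcal{L}\circ\mathcal{R}$ (which equals $\mathcal{R}\circ\mathcal{L}$); $L_x,R_x,H_x,D_x$ denote the classes of $x$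 in $(\mathcal{T}_n,*_a)$. *)

From mathcomp Require Import all_boot.
Set Implicit Arguments. Unset Strict Implicit. Unset Printing Implicit Defensive.

(* T_n : all maps N -> N, N = {1..n} represented by 'I_n *)
Definition Tn (n : nat) := {ffun 'I_n -> 'I_n}.

(* composition left to right: (x y)(i) = y (x i) *)
Definition tcomp n (x y : Tn n) : Tn n := [ffun i => y (x i)].

Definition smul n (a x y : Tn n) : Tn n := tcomp (tcomp x a) y.

Definition ran n (x : Tn n) : {set 'I_n} := [set x i | i in 'I_n].
Definition rank n (x : Tn n) : nat := #|ran x|.

Definition rho n (x : Tn n) : {set {set 'I_n}} :=
  [set [set j | x j == x i] | i in 'I_n].

Definition S1left n (a x : Tn n) (z : Tn n) : Prop :=
  z = x \/ exists s : Tn n, z = smul a s x.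

Definition Lrel n (a x y : Tn n) : Prop :=
  forall z, S1left a x z <-> S1left a y z.

From mathcomp Require Import all_boot.

Set Implicit Arguments.
Unset Strict Implicit.
Unset Printing Implicit Defensive.

(* Since [s *_a x = (s a) x], the left ideal [S^1 x] of [(T_n, *_a)] is [x]
   together with all maps whose range lies in [x(ran a)].  So two
   distinct [L]-related maps [x], [y] satisfy [ran y ⊆ x(ran a) ⊆ ran x] and
   symmetrically, whence [ran x = ran y = x(ran a) = y(ran a)]: every fibre of
   [x] and of [y] meets [ran a], which also gives [rank x <= rank a].
   Conversely these conditions make the two ideals equal.  Finally maps of
   rank at most one are determined by their range, which disposes of the
   remaining cases. *)

Section Ranges.
Variable n : nat.
Implicit Types (x y : Tn n) (A : {set 'I_n}).

Lemma imset_sub_ran x A : x @: A \subset ran x.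
Proof. by apply/subsetP=> _ /imsetP[i _ ->]; exact: imset_f. Qed.

Lemma rho_meetP x A :
  (forall B, B \in rho x -> B :&: A != set0) <-> ran x \subset x @: A.
Proof.
split=> [meetA | ranA B /imsetP[i _ ->]].
- apply/subsetP=> _ /imsetP[i _ ->].
  have /set0Pn[j] : [set j | x j == x i] :&: A != set0.
    by apply: meetA; exact: imset_f.
  by rewrite !inE => /andP[/eqP <- Aj]; exact: imset_f.
- have /imsetP[j Aj xij] : x i \in x @: A by apply: (subsetP ranA); exact: imset_f.
  by apply/set0Pn; exists j; rewrite !inE -xij eqxx.
Qed.

Lemma ran_le1_inj x y : ran y = ran x -> rank x <= 1 -> y = x.
Proof.
move=> ran_yx /card_le1_eqP ran_x_le1; apply/ffunP=> i.
by apply: ran_x_le1; [|rewrite -ran_yx]; exact: imset_f.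
Qed.

End Ranges.

Section SandwichLeftIdeals.
Variables (n : nat) (a : Tn n).
Implicit Types x y z : Tn n.

Definition fibres_meet_ran x : bool := ran x \subset x @: ran a.

Lemma fibres_meet_ranE x : fibres_meet_ran x -> x @: ran a = ran x.
Proof. by move=> fx; apply/eqP; rewrite eqEsubset imset_sub_ran. Qed.

Lemma S1leftP x z : S1left a x z <-> z = x \/ ran z \subset x @: ran a.
Proof.
split=> [[-> | [s ->]] | [-> | ran_z]]; [by left | right | by left | right].
- apply/subsetP=> _ /imsetP[i _ ->]; rewrite !ffunE.
  by apply: imset_f; exact: imset_f.
- have pre i : exists k, x (a k) == z i.
    have /imsetP[_ /imsetP[k _ ->] ->] : z i \in x @: ran a.
      by apply: (subsetP ran_z); exact: imset_f.
    by exists k.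
  exists [ffun i => odflt i [pick k | x (a k) == z i]].
  apply/ffunP=> i; rewrite !ffunE.
  case: pickP=> [k /eqP // | none]; case: (pre i)=> k; by rewrite none.
Qed.

Lemma Lrel_neq x y : Lrel a y x ->
  y = x \/ [/\ fibres_meet_ran y, fibres_meet_ran x & ran y = ran x].
Proof.
move=> Lyx; have [-> | y_neq_x] := eqVneq y x; [by left | right].
have /S1leftP[y_x | ran_yx] : S1left a x y by apply/Lyx; left.
  by rewrite y_x eqxx in y_neq_x.
have /S1leftP[x_y | ran_xy] : S1left a y x by apply/Lyx; left.
  by rewrite x_y eqxx in y_neq_x.
have ran_y_x : ran y = ran x.
  apply/eqP; rewrite eqEsubset (subset_trans ran_yx (imset_sub_ran _ _)).
  exact: subset_trans ran_xy (imset_sub_ran _ _).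
by split=> //; rewrite /fibres_meet_ran ?ran_y_x // -ran_y_x.
Qed.

Lemma Lrel_ran_eq x y :
  fibres_meet_ran x -> fibres_meet_ran y -> ran y = ran x -> Lrel a y x.
Proof.
move=> fx fy ran_yx z.
have S1left_ran w : fibres_meet_ran w -> S1left a w z <-> ran z \subset ran w.
  move=> fw; rewrite -(fibres_meet_ranE fw); split=> [/S1leftP[-> |] // | ran_z].
  by apply/S1leftP; right.
split=> [/(S1left_ran _ fy) | /(S1left_ran _ fx)] ran_z; apply/S1left_ran => //.
  by rewrite -ran_yx.
by rewrite ran_yx.
Qed.

Lemma fibres_meet_ran_rank x : fibres_meet_ran x -> rank x <= rank a.
Proof. by move=> fx; rewrite /rank -(fibres_meet_ranE fx) leq_imset_card. Qed.

End SandwichLeftIdeals.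

Theorem theorem6 (n : nat) (hn : 1 < n) (a : Tn n) :
  (forall x : Tn n,
     (1 < rank a /\ rank x <= rank a /\
        (forall B, B \in rho x -> B :&: ran a != set0)) ->
     forall y : Tn n, Lrel a y x <->
       (ran y = ran x /\ forall B, B \in rho y -> B :&: ran a != set0)) /\
  (forall x : Tn n,
     ~ (1 < rank a /\ rank x <= rank a /\
        (forall B, B \in rho x -> B :&: ran a != set0)) ->
     forall y : Tn n, Lrel a y x <-> y = x) /\
  (rank a = 1 -> forall x y : Tn n, Lrel a y x -> y = x).
Proof.
split; [|split].
- move=> x [_ [_ /rho_meetP fx]] y; split.
  + by case/Lrel_neq=> [-> | [fy _ ran_yx]]; split=> //; exact/rho_meetP.
  + by case=> ran_yx /rho_meetP fy; exact: Lrel_ran_eq.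
- move=> x not_class y; split=> [|->]; last by [].
  case/Lrel_neq=> [// | [_ fx ran_yx]]; apply: ran_le1_inj ran_yx _.
  rewrite leqNgt; apply/negP=> rank_x_gt1; apply: not_class.
  split; last by split; [exact: fibres_meet_ran_rank | exact/rho_meetP].
  exact: leq_trans rank_x_gt1 (fibres_meet_ran_rank fx).
- move=> rank_a1 x y /Lrel_neq [// | [_ fx ran_yx]].
  by apply: ran_le1_inj ran_yx _; rewrite -rank_a1 fibres_meet_ran_rank.
Qed.
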